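(* Let $K$ be a clique simplicial complex, $X\cup Y=K_0$ a cover of its vertex set, $A:=X\cap Y$, and $P:=\{\sigma\in K\mid\sigma\subset X\text{ or }\sigma\subset Y\text{ or }\sigma\cap A\neq\emptyset\}$. Assume one of the following: (1) there is a vertex $v$ in $\bigcap_{\tau\in K_1\setminus P}\mathrm{St}(\tau,A)$ such that, for every edge $\tau\in K_1\setminus P$ and every vertex $w$ of $\mathrm{St}(\tau,A)$, $\{v,w\}$ is a simplex of $K$; (2) there is a vertex $v$ in $\bigcap_{\tau\in K_1\setminus P}\mathrm{St}(\tau,A)$ such that, for every edge $\tau\in K_1\setminus P$, $v$ is a central vertex of $\mathrm{St}(\tau,A)$; (3) there is $v\in A$ such that for every simplex $\tau$ of $K$ with $|\tau\cap(X\setminus A)|=1$, $|\tau\cap(Y\setminus A)|=1$ and $|\tau\cap A|\le1$, the set $\tau\cup\{v\}$ is a simplex of $K$. Then the inclusion $K_X\cup K_Y\hookrightarrow K$ is a weak equivalence.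
   Context: A simplicial complex is a collection of finite nonempty subsets of a fixed set closed under taking nonempty subsets; $K_0$ is its vertex set, $K_1$ its set of edges, $K_B$ the subcomplex of simplices contained in $B$. $K$ is clique if a set with at least two elements is a simplex iff all its two-element subsets are simplices. $\mathrm{St}(\sigma,A):=\{\mu\subset A\mid 0<|\mu|<\infty,\ \mu\cup\sigma\in K\}$. A simplex $\tau$ of a complex $L$ is central if $\sigma\cup\tau\in L$ for every simplex $\sigma$ of $L$; a vertex $v$ is central if $\{v\}$ is. Homotopical notions refer to geometric realizations. *)

From HB Require Import structures.
From mathcomp Require Import all_boot all_order all_algebra.
From mathcomp Require Import all_classical all_reals all_analysis.
Set Implicit Arguments.
Unset Strict Implicit.
Unset Printing Implicit Defensive.
Import Order.TTheory GRing.Theory Num.Theory.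
Import numFieldTopology.Exports.
Local Open Scope classical_set_scope.
Local Open Scope ring_scope.

Definition simplicial_complex (V : Type) (K : set (set V)) : Prop :=
  (forall s, K s -> finite_set s /\ s !=set0) /\
  (forall s t, K s -> t `<=` s -> t !=set0 -> K t).

Definition vertices (V : Type) (K : set (set V)) : set V :=
  [set v | K [set v]].

Definition is_pair (V : Type) (s : set V) : Prop :=
  exists a b, a <> b /\ s = [set a; b].

Definition edges (V : Type) (K : set (set V)) : set (set V) :=
  [set s | K s /\ is_pair s].

Definition clique (V : Type) (K : set (set V)) : Prop :=
  forall s, finite_set s -> (exists a b, s a /\ s b /\ a <> b) ->
    (K s <-> forall a b, s a -> s b -> a <> b -> K [set a; b]).

Definition full_sub (V : Type) (K : set (set V)) (B : set V) : set (set V) :=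
  [set s | K s /\ s `<=` B].

Definition St (V : Type) (K : set (set V)) (sigma A : set V) : set (set V) :=
  [set mu | mu `<=` A /\ mu !=set0 /\ finite_set mu /\ K (mu `|` sigma)].

Definition central_vertex (V : Type) (L : set (set V)) (v : V) : Prop :=
  forall s, L s -> L (s `|` [set v]).

Definition is_singleton (V : Type) (S : set V) : Prop := exists x, S = [set x].
Definition at_most_one (V : Type) (S : set V) : Prop :=
  forall x y, S x -> S y -> x = y.

Unset Implicit Arguments.
Section Realization.
Variables (R : realType) (V : choiceType).

Definition supp (f : V -> R) : set V := [set v | f v != 0].

Definition gsimplex (sigma : set V) : set (V -> R) :=
  [set f | (forall v, 0 <= f v) /\ supp f `<=` sigma /\
           (\sum_(v \in sigma) f v)%R = 1].

Definition realization (K : set (set V)) : set (V -> R) :=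
  [set f | exists2 s, K s & gsimplex s f].

(* U is open in |K| for the coherent (weak) topology: U meets every closed
   simplex in a relatively open subset (|sigma| carries the Euclidean =
   product topology inherited from R^V) *)
Definition coherent_open (K : set (set V)) (U : set (V -> R)) : Prop :=
  U `<=` realization K /\
  forall s, K s -> exists W : set {ptws V -> R},
      open W /\ U `&` gsimplex s = W `&` gsimplex s.

Definition cont_on {Z : topologicalType} (K : set (set V)) (D : set Z)
    (g : Z -> V -> R) : Prop :=
  (forall z, D z -> realization K (g z)) /\
  forall U, coherent_open K U ->
    exists O : set Z, open O /\ g @^-1` U `&` D = O `&` D.

Definition usphere (n : nat) : set 'rV[R]_n.+1 :=
  [set s | (\sum_(i < n.+1) s ord0 i ^+ 2) = 1].

Definition sbase (n : nat) : 'rV[R]_n.+1 := \row_(i < n.+1) (i == ord0)%:R.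

Definition pointed_map (K : set (set V)) (n : nat) (x : V -> R)
    (g : 'rV[R]_n.+1 -> V -> R) : Prop :=
  cont_on K (usphere n) g /\ g (sbase n) = x.

Definition phomotopic (K : set (set V)) (n : nat) (x : V -> R)
    (g1 g2 : 'rV[R]_n.+1 -> V -> R) : Prop :=
  exists H : ('rV[R]_n.+1 * R)%type -> V -> R,
    cont_on K (usphere n `*` (`[0, 1]%classic : set R)) H /\
    (forall s, usphere n s -> H (s, 0) = g1 s /\ H (s, 1) = g2 s) /\
    (forall t : R, `[0, 1]%classic t -> H (sbase n, t) = x).

(* the inclusion |L| -> |K| (L a subcomplex of K) induces a bijection
   pi_n(|L|, x) -> pi_n(|K|, x) for every n >= 0 and every x in |L|
   (pi_n = pointed homotopy classes of pointed maps from S^n; n = 0 gives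
   pi_0) *)
Definition incl_weak_equivalence (L K : set (set V)) : Prop :=
  forall (n : nat) (x : V -> R), realization L x ->
    (forall g, pointed_map K n x g ->
       exists2 h, pointed_map L n x h & phomotopic K n x h g) /\
    (forall h1 h2, pointed_map L n x h1 -> pointed_map L n x h2 ->
       phomotopic K n x h1 h2 -> phomotopic L n x h1 h2).

End Realization.
Arguments incl_weak_equivalence R {V} L K.

(* Call a simplex mixed when it meets both X \ Y and Y \ X.  Each of the
   three conditions gives a vertex v ∈ X ∩ Y adjacent to every vertex of every
   mixed simplex s (through the stars of the edges joining X \ Y to Y \ X in
   cases 1 and 2, through the triangles of s in case 3), so that s ∪ {v} is a
   simplex of the clique complex K.
   On a point f of |s| the retraction moves the weight min (f w, m) from every
   vertex w of X \ Y or Y \ X to v, where m is the total weight of f on the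
   opposite side.  The lighter side is emptied, so the image lies in
   |(s ∪ {v}) ∩ X| or in |(s ∪ {v}) ∩ Y|, and points of |K_X ∪ K_Y| are fixed.
   The straight-line homotopy to the identity stays in |s ∪ {v}|, hence
   |K_X ∪ K_Y| is a strong deformation retract of |K|.  Continuity for the
   coherent topology is checked simplexwise: on |s| the retraction is a single
   continuous formula, and on each of the two closed pieces where one side is
   the heavier one it lands in a single simplex of K_X ∪ K_Y. *)

From HB Require Import structures.
From mathcomp Require Import all_boot all_order all_algebra.
From mathcomp Require Import all_classical all_reals all_analysis.
Import Order.TTheory GRing.Theory Num.Theory.
Import numFieldTopology.Exports.
Set Implicit Arguments.
Unset Strict Implicit.
Unset Printing Implicit Defensive.
Local Open Scope classical_set_scope.
Local Open Scope ring_scope.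

Lemma open_tube (S T U : topologicalType) (Phi : T * S -> U) (J : set S)
    (W : set U) :
  continuous Phi -> compact J -> open W ->
  open [set x | forall t, J t -> W (Phi (x, t))].
Proof.
move=> cPhi cJ oW; rewrite openE => x0 Wx0.
have := (compact_near_coveringP J).1 cJ T (nbhs x0) (fun x t => W (Phi (x, t))).
apply => t Jt; have : nbhs (x0, t) (Phi @^-1` W).
  by apply: cPhi; apply: open_nbhs_nbhs; split => //; exact: Wx0.
case=> [[A B]] /= [nA nB] AB.
by exists (B, A) => //= -[t' x] [/= Bt Ax]; exact: (AB (x, t')).
Qed.

Lemma relatively_open_local (T : topologicalType) (S D : set T) :
  (forall p, S p -> D p -> exists B, [/\ open B, B p & B `&` D `<=` S]) ->
  exists O, open O /\ S `&` D = O `&` D.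
Proof.
move=> loc; exists [set p | exists B, [/\ open B, B p & B `&` D `<=` S]]; split.
  rewrite openE => p [B [oB Bp BS]]; apply: (@filterS _ _ _ B).
    by move=> q Bq; exists B.
  exact: oB.
apply/seteqP; split => p [Sp Dp]; split => //; first exact: loc.
by case: Sp => B [_ Bp]; apply.
Qed.

Lemma relatively_open_closed_cover (T : topologicalType)
    (S D C1 C2 O1 O2 : set T) :
  closed C1 -> closed C2 -> D `<=` C1 `|` C2 -> open O1 -> open O2 ->
  S `&` (D `&` C1) = O1 `&` (D `&` C1) -> S `&` (D `&` C2) = O2 `&` (D `&` C2) ->
  exists O, open O /\ S `&` D = O `&` D.
Proof.
move=> cC1 cC2 DC oO1 oO2 E1 E2.
have SO1 p : D p -> C1 p -> S p <-> O1 p.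
  move=> Dp C1p; split => [Sp|inO1].
    by have [] : (O1 `&` (D `&` C1)) p by rewrite -E1.
  by have [] : (S `&` (D `&` C1)) p by rewrite E1.
have SO2 p : D p -> C2 p -> S p <-> O2 p.
  move=> Dp C2p; split => [Sp|inO2].
    by have [] : (O2 `&` (D `&` C2)) p by rewrite -E2.
  by have [] : (S `&` (D `&` C2)) p by rewrite E2.
exists ((O1 `&` O2) `|` (O1 `\` C2) `|` (O2 `\` C1)); split.
  by apply: openU; [apply: openU|]; apply: openI => //; exact: closed_openC.
apply/seteqP; split => p [Sp Dp]; split => //.
  have [C1p|nC1p] := pselect (C1 p); last first.
    by case: (DC p Dp) => // C2p; right; split => //; apply/SO2.
  have [C2p|nC2p] := pselect (C2 p).
    by left; left; split; [apply/SO1|apply/SO2].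
  by left; right; split => //; apply/SO1.
case: Sp => [[[inO1 inO2]|[inO1 nC2p]]|[inO2 nC1p]].
- by case: (DC p Dp) => Cp; [apply/(SO1 p)|apply/(SO2 p)].
- by apply/(SO1 p) => //; case: (DC p Dp).
- by apply/(SO2 p) => //; case: (DC p Dp).
Qed.

Lemma closed_le_continuous (T : topologicalType) (R : realType)
    (a b : T -> R) :
  continuous a -> continuous b -> closed [set x | a x <= b x].
Proof.
move=> ca cb.
have -> : [set x | a x <= b x] = (fun x => b x - a x) @^-1` [set y | 0 <= y].
  by apply/seteqP; split => x /=; rewrite subr_ge0.
have cba : continuous (fun x => b x - a x).
  by move=> x; apply: continuousB; [exact: cb | exact: ca].
by move/continuous_closedP : cba; apply; exact: closed_ge.
Qed.

Lemma continuous_line (T : topologicalType) (R : realType) (t a b : T -> R) :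
  continuous t -> continuous a -> continuous b ->
  continuous (fun x => (1 - t x) * a x + t x * b x).
Proof.
move=> ct ca cb x.
apply: (continuousD (f := (fun y => 1 - t y) \* a) (g := t \* b)).
  exact: continuousM (continuousB (cvg_cst _) (ct x)) (ca x).
exact: continuousM (ct x) (cb x).
Qed.

Lemma continuous_slice (S T U : topologicalType) (F : S * T -> U) (x : S) :
  continuous F -> continuous (fun t => F (x, t)).
Proof.
move=> cF t; apply: (@continuous_comp _ _ _ (pair x) F); last exact: cF.
exact: (@cvg_pair _ _ _ _ (nbhs x) (nbhs t) _ _ _ (fun=> x) id (cvg_cst _) cvg_id).
Qed.

Lemma fsum_continuous (T : topologicalType) (R : realType) (I : choiceType)
    (E : set I) (G : I -> T -> R) :
  finite_set E -> (forall i, continuous (G i)) ->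
  continuous (fun x => \sum_(i \in E) G i x).
Proof.
move=> fin_E cG.
under eq_fun do rewrite fsbig_finite //.
by apply: continuous_big => //; exact: add_continuous.
Qed.

Lemma ptws_continuous (T : topologicalType) (I : choiceType) (U : uniformType)
    (g : T -> {ptws I -> U}) :
  (forall i, continuous (fun x => g x i)) -> continuous g.
Proof.
move=> cg x; apply: (@pointwise_cvgP (discrete_topology I) U (g @ nbhs x) (g x) _).2.
by move=> i; exact: cg.
Qed.

Lemma ptws_eval_continuous (I : choiceType) (U : uniformType) (i : I) :
  continuous (fun f : {ptws I -> U} => f i).
Proof.
move=> f; apply: (@pointwise_cvgP (discrete_topology I) U (nbhs f) f _).1.
exact: cvg_id.
Qed.

Section GeometricSimplex.
Variables (R : realType) (V : choiceType).
Local Notation gsimplex := (gsimplex R V).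
Implicit Types (s : set V) (f g : V -> R).

Lemma gsimplex_ge0 s f : gsimplex s f -> forall w, 0 <= f w.
Proof. by case. Qed.

Lemma gsimplex_eq0 s f : gsimplex s f -> forall w, ~ s w -> f w = 0.
Proof.
case=> _ [sf _] w nsw; apply/eqP; apply: contrapT => /negP fw.
exact/nsw/sf.
Qed.

Lemma gsimplex_sum s f : gsimplex s f -> \sum_(w \in s) f w = 1.
Proof. by case=> _ []. Qed.

Lemma gsimplex_intro s f : (forall w, 0 <= f w) -> (forall w, ~ s w -> f w = 0) ->
  \sum_(w \in s) f w = 1 -> gsimplex s f.
Proof.
move=> f0 f_out f1; split => //; split => // w /= fw.
by apply: contrapT => nsw; move/eqP: fw; apply; exact: f_out.
Qed.

Lemma gsimplex_sub s s' f : s `<=` s' -> gsimplex s f -> gsimplex s' f.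
Proof.
move=> ss' sf; apply: gsimplex_intro; first exact: gsimplex_ge0 sf.
  by move=> w ns'w; apply: (gsimplex_eq0 sf) => /ss'.
rewrite -(gsimplex_sum sf); apply/esym/fsbig_widen => // w [_ nsw].
exact: (gsimplex_eq0 sf).
Qed.

Lemma gsimplex_setI s Z f : gsimplex s f ->
  (forall w, s w -> ~ Z w -> f w = 0) -> gsimplex (s `&` Z) f.
Proof.
move=> sf fZ; apply: gsimplex_intro; first exact: gsimplex_ge0 sf.
  move=> w /not_andP [nsw|nZw]; first exact: (gsimplex_eq0 sf).
  have [sw|nsw] := pselect (s w); first exact: fZ.
  exact: (gsimplex_eq0 sf).
rewrite -(gsimplex_sum sf); apply: fsbig_widen => // w [sw /not_andP [//|]].
exact: fZ.
Qed.

Lemma gsimplex_line s f g t : finite_set s -> gsimplex s f -> gsimplex s g ->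
  0 <= t <= 1 -> gsimplex s (fun w => (1 - t) * g w + t * f w).
Proof.
move=> fin_s sf sg /andP [t0 t1]; apply: gsimplex_intro.
- move=> w; apply: addr_ge0; apply: mulr_ge0;
    by rewrite ?subr_ge0 ?(gsimplex_ge0 sf) ?(gsimplex_ge0 sg).
- by move=> w nsw; rewrite (gsimplex_eq0 sf) // (gsimplex_eq0 sg) // !mulr0 addr0.
rewrite fsbig_split // -!mulr_fsumr (gsimplex_sum sf) (gsimplex_sum sg).
by rewrite !mulr1; exact: subrK.
Qed.

Lemma coherent_open_simplex (K : set (set V)) U s :
  coherent_open R V K U -> K s ->
  exists2 W : set {ptws V -> R}, open W & forall f, gsimplex s f -> U f <-> W f.
Proof.
move=> [_ UK] Ks; have [W [oW EW]] := UK s Ks; exists W => // f sf.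
split => [Uf|Wf].
  by have [] : (W `&` gsimplex s) f by rewrite -EW.
by have [] : (U `&` gsimplex s) f by rewrite EW.
Qed.

End GeometricSimplex.

Section DeformationRetraction.
Variables (R : realType) (V : choiceType) (K L : set (set V)).
Variable r : (V -> R) -> V -> R.
Local Notation gsimplex := (gsimplex R V).
Local Notation realization := (realization R V).
Local Notation coherent_open := (coherent_open R V).
Local Notation cont_on := (cont_on R V).

Hypothesis K_finite : forall s, K s -> finite_set s.
Hypothesis r_fix : forall f, realization L f -> r f = f.
Hypothesis r_simplexwise : forall s, K s ->
  exists h : {ptws V -> R} -> {ptws V -> R}, continuous h /\
  exists2 s', K s' & s `<=` s' /\
    forall f, gsimplex s f -> r f = h f /\ gsimplex s' (r f).
Hypothesis r_piecewise : forall s, K s ->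
  exists (C1 C2 : set {ptws V -> R}) s1 s2, [/\ closed C1, closed C2, L s1, L s2 &
    forall f, gsimplex s f ->
      [/\ C1 f \/ C2 f, C1 f -> gsimplex s1 (r f) & C2 f -> gsimplex s2 (r f)]].

Lemma realization_retraction f : realization K f -> realization L (r f).
Proof.
case=> s Ks sf; have [C1 [C2 [s1 [s2 [_ _ Ls1 Ls2 /(_ f sf) [[C1f|C2f] rC1 rC2]]]]]] :=
  r_piecewise Ks.
- by exists s1 => //; exact: rC1.
- by exists s2 => //; exact: rC2.
Qed.

Lemma coherent_open_retraction U : coherent_open L U ->
  coherent_open K [set f | realization K f /\ U (r f)].
Proof.
move=> UL; split => [f []//|s Ks].
have [h [ch [s' _ [_ rh]]]] := r_simplexwise Ks.
have [C1 [C2 [s1 [s2 [cC1 cC2 Ls1 Ls2 rC]]]]] := r_piecewise Ks.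
have piece s'' (C : set {ptws V -> R}) : L s'' ->
    (forall f, gsimplex s f -> C f -> gsimplex s'' (r f)) ->
    exists O : set {ptws V -> R}, open O /\
      [set f | realization K f /\ U (r f)] `&` (gsimplex s `&` C) =
      O `&` (gsimplex s `&` C).
  move=> Ls'' rs''; have [W oW UW] := coherent_open_simplex UL Ls''.
  exists (h @^-1` W); split; first by move/continuousP: ch; apply.
  apply/seteqP; split => f [Sf [sf Cf]]; split => //; have [rhf _] := rh f sf.
  - by rewrite /= -rhf -UW; [case: Sf | exact: rs'' sf Cf].
  - split; first by exists s.
    by rewrite UW; [rewrite rhf | exact: rs'' sf Cf].
have rC1 f : gsimplex s f -> C1 f -> gsimplex s1 (r f) by move=> /rC[].
have rC2 f : gsimplex s f -> C2 f -> gsimplex s2 (r f) by move=> /rC[].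
have [B1 [oB1 E1]] := piece s1 C1 Ls1 rC1.
have [B2 [oB2 E2]] := piece s2 C2 Ls2 rC2.
apply: relatively_open_closed_cover cC1 cC2 _ oB1 oB2 E1 E2.
by move=> f sf; case: (rC f sf).
Qed.

Lemma cont_on_retraction (Z : topologicalType) (D : set Z) (g : Z -> V -> R) :
  cont_on K D g -> cont_on L D (fun z => r (g z)).
Proof.
move=> [gK gU]; split => [z Dz|U UL]; first exact/realization_retraction/gK.
have [B [oB EB]] := gU _ (coherent_open_retraction UL).
exists B; split => //; rewrite -EB; apply/seteqP; split => z [Uz Dz]; split => //.
- by split => //; exact: gK.
- by case: Uz.
Qed.

Definition line_homotopy (p : (V -> R) * R) : V -> R :=
  fun w => (1 - p.2) * r p.1 w + p.2 * p.1 w.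

Lemma line_homotopy_simplexwise s : K s ->
  exists Hs : {ptws V -> R} * R -> {ptws V -> R}, continuous Hs /\
  exists2 s', K s' & forall f t, gsimplex s f -> `[0, 1]%classic t ->
    line_homotopy (f, t) = Hs (f, t) /\ gsimplex s' (line_homotopy (f, t)).
Proof.
move=> Ks; have [h [ch [s' Ks' [ss' rh]]]] := r_simplexwise Ks.
exists (fun p w => (1 - p.2) * h p.1 w + p.2 * p.1 w); split.
  have eval_fst_continuous (F : {ptws V -> R} -> {ptws V -> R}) w : continuous F ->
      continuous (fun p : {ptws V -> R} * R => F p.1 w).
    move=> cF p; apply: (@continuous_comp _ _ _ fst (fun f => F f w)).
      exact: cvg_fst.
    apply: (@continuous_comp _ _ _ F (fun f : {ptws V -> R} => f w)).
      exact: cF.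
    exact: ptws_eval_continuous.
  apply: ptws_continuous => w /=; apply: continuous_line.
  - by move=> p; exact: cvg_snd.
  - exact: eval_fst_continuous.
  - by apply: (eval_fst_continuous id) => q; exact: cvg_id.
exists s' => // f t sf t01; have [rhf rs'] := rh f sf.
split; first by rewrite /line_homotopy /= rhf.
apply: gsimplex_line rs' _; first exact: K_finite.
  exact: gsimplex_sub ss' sf.
by move: t01; rewrite /= in_itv.
Qed.

Lemma coherent_open_line_homotopy U (t0 d : R) : coherent_open K U ->
  coherent_open K [set f | realization K f /\ forall t, `[0, 1]%classic t ->
    `|t - t0| <= d -> U (line_homotopy (f, t))].
Proof.
move=> UK; split => [f []//|s Ks].
have [Hs [cHs [s' Ks' HHs]]] := line_homotopy_simplexwise Ks.
have [W oW UW'] := coherent_open_simplex UK Ks'.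
have UW f t : gsimplex s f -> `[0, 1]%classic t ->
    U (line_homotopy (f, t)) <-> W (Hs (f, t)).
  by move=> sf t01; have [<- ?] := HHs f t sf t01; exact: UW'.
pose J := `[t0 - d, t0 + d]%classic `&` `[0, 1]%classic.
have cJ : compact J.
  by apply: compact_closedI; [exact: segment_compact | exact: itv_closed].
exists [set f | forall t, J t -> W (Hs (f, t))]; split.
  exact: (open_tube cHs cJ oW).
apply/seteqP; split => f [Sf sf]; split => //.
- case: Sf => _ Uf t [tJ t01]; apply/(UW f t sf t01)/Uf => //.
  by move: tJ; rewrite /= in_itv ler_distl.
- split; first by exists s.
  move=> t t01 tt0; apply/(UW f t sf t01)/Sf; split => //.
  by rewrite /= in_itv -ler_distl.
Qed.

Lemma cont_on_line_homotopy (Z : topologicalType) (D : set Z) (g : Z -> V -> R) :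
  cont_on K D g ->
  cont_on K (D `*` (`[0, 1]%classic : set R)) (fun p => line_homotopy (g p.1, p.2)).
Proof.
move=> [gK gU]; split.
  move=> [z t] [/= Dz t01]; have [s Ks sgz] := gK z Dz.
  have [Hs [_ [s' Ks' HHs]]] := line_homotopy_simplexwise Ks.
  by exists s' => //; have [] := HHs _ _ sgz t01.
move=> U UK; apply: relatively_open_local => -[z0 t0] /= Uzt0 [/= Dz0 t01].
have [s0 Ks0 sgz0] := gK z0 Dz0.
have [Hs [cHs [s0' Ks0' HHs]]] := line_homotopy_simplexwise Ks0.
have [W0 oW0 UW0] := coherent_open_simplex UK Ks0'.
have UW t : `[0, 1]%classic t -> U (line_homotopy (g z0, t)) <-> W0 (Hs (g z0, t)).
  by move=> t01'; have [<- ?] := HHs _ t sgz0 t01'; exact: UW0.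
have /nbhs_ballP [e e0 He] : nbhs t0 ((fun t => Hs (g z0, t)) @^-1` W0).
  apply: (continuous_slice cHs).
  by apply: open_nbhs_nbhs; split => //; apply/UW.
(* Compactness of the t-interval makes the set of points whose homotopy path
   stays in U near t0 coherent-open; its preimage under g is open in Z. *)
have [B [oB EB]] := gU _ (coherent_open_line_homotopy t0 (e / 2) UK).
have ball_le t : ball t0 (e / 2) t -> `|t - t0| <= e / 2.
  by rewrite -ball_normE /= distrC => /ltW.
exists ((fst @^-1` B) `&` (snd @^-1` ball t0 (e / 2))); split.
- apply: openI; apply: open_comp; try exact: oB; try exact: ball_open.
    by move=> p _; exact: cvg_fst.
  by move=> p _; exact: cvg_snd.
- have : (g @^-1` [set f | realization K f /\ forall t, `[0, 1]%classic t ->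
      `|t - t0| <= e / 2 -> U (line_homotopy (f, t))] `&` D) z0.
    split => //; split; first exact: gK.
    move=> t t01' tt0; apply/UW => //; apply: He.
    rewrite -ball_normE /= distrC; apply: le_lt_trans tt0 _.
    by rewrite ltr_pdivrMr // ltr_pMr // ltr1n.
  by rewrite EB => -[Bz _]; split => //; apply: ballxx; exact: divr_gt0.
- move=> [z t] [[/= Bz /ball_le tt0] [/= Dz t01']].
  have : (B `&` D) z by [].
  by rewrite -EB => -[[_ Uz] _]; exact: Uz.
Qed.

Lemma incl_weak_equivalence_of_retraction : incl_weak_equivalence R L K.
Proof.
have H0 f : line_homotopy (f, 0) = r f.
  by apply: funext => w; rewrite /line_homotopy /= subr0 mul1r mul0r addr0.
have H1 f : line_homotopy (f, 1) = f.
  by apply: funext => w; rewrite /line_homotopy /= subrr mul0r mul1r add0r.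
have H_fix f t : realization L f -> line_homotopy (f, t) = f.
  move/r_fix => rf; apply: funext => w; rewrite /line_homotopy /= rf.
  by rewrite -mulrDl subrK mul1r.
move=> n x Lx; split.
  move=> g [cg gx]; exists (fun s => r (g s)).
    by split; [exact: cont_on_retraction | rewrite gx r_fix].
  exists (fun p => line_homotopy (g p.1, p.2)); split.
    exact: cont_on_line_homotopy.
  by split => [s _|t _]; rewrite /= ?H0 ?H1 // gx H_fix.
move=> h1 h2 [ch1 h1x] [ch2 h2x] [H [cH [H01 Hx]]].
exists (fun p => r (H p)); split; first exact: cont_on_retraction.
split => [s us|t t01]; last by rewrite /= Hx // r_fix.
by have [-> ->] := H01 s us; rewrite (r_fix (ch1.1 s us)) (r_fix (ch2.1 s us)).
Qed.

End DeformationRetraction.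

Section TransferRetraction.
Variables (R : realType) (V : choiceType) (P Q : set V) (v : V).
Implicit Types (D Z : set V) (f : V -> R).

Definition mass D Z f : R := \sum_(w \in D `&` Z) f w.

Definition cut D Z Z' f w : R :=
  if w \in Z then Num.min (f w) (mass D Z' f) else 0.

Definition shift D f w : R := cut D P Q f w + cut D Q P f w.

Definition transfer_retraction D f : V -> R :=
  fun w => f w - shift D f w + (if w == v then \sum_(u \in D) shift D f u else 0).

Lemma mass_ge0 D Z f : (forall w, 0 <= f w) -> 0 <= mass D Z f.
Proof. by move=> f0; apply: fsumr_ge0 => w _. Qed.

Lemma mass_continuous D Z : finite_set D ->
  continuous (mass D Z : {ptws V -> R} -> R).
Proof.
move=> fin_D; apply: fsum_continuous; first exact: finite_setIl.
by move=> w; exact: ptws_eval_continuous.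
Qed.

Lemma shift_ge0 D f w : (forall w, 0 <= f w) -> 0 <= shift D f w.
Proof.
move=> f0; rewrite /shift /cut.
by apply: addr_ge0; case: ifP; rewrite ?le_min ?f0 ?mass_ge0.
Qed.

Hypothesis PQ : forall w, P w -> ~ Q w.

Lemma shift_le D f w : (forall w, 0 <= f w) -> shift D f w <= f w.
Proof.
move=> f0; rewrite /shift /cut; case: ifP => [/set_mem Pw|_].
  have -> : (w \in Q) = false by apply/negbTE/negP => /set_mem; exact: PQ.
  by rewrite addr0 ge_min lexx.
by case: ifP => _; rewrite add0r ?ge_min ?lexx ?f0.
Qed.

Lemma shift_eq0 D f w : (forall w, 0 <= f w) -> f w = 0 -> shift D f w = 0.
Proof. by move=> f0 fw0; apply/le_anti; rewrite shift_ge0 // andbT -fw0 shift_le. Qed.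

Lemma transfer_retraction_ge0 D f w : (forall w, 0 <= f w) ->
  0 <= transfer_retraction D f w.
Proof.
move=> f0; rewrite /transfer_retraction addr_ge0 ?subr_ge0 ?shift_le //.
by case: eqP => // _; apply: fsumr_ge0 => u _; exact: shift_ge0.
Qed.

Lemma transfer_retraction_widen D f :
  (forall w, 0 <= f w) -> (forall w, ~ D w -> f w = 0) ->
  transfer_retraction setT f = transfer_retraction D f.
Proof.
move=> f0 fD.
have mass_widen Z : mass setT Z f = mass D Z f.
  by apply/esym/fsbig_widen => [w [_ Zw]//|w [[_ Zw] /not_andP [/fD|//]]].
have shift_widen : shift setT f = shift D f.
  by apply: funext => w; rewrite /shift /cut !mass_widen.
apply: funext => w; rewrite /transfer_retraction shift_widen.
rewrite -(fsbig_widen D setT) // => u [_ /fD fu0].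
exact: shift_eq0.
Qed.

Lemma transfer_retraction_sum D f : finite_set D -> D v ->
  \sum_(w \in D) transfer_retraction D f w = \sum_(w \in D) f w.
Proof.
move=> fin_D Dv.
have fsumB (F G : V -> R) :
    \sum_(w \in D) (F w - G w) = \sum_(w \in D) F w - \sum_(w \in D) G w.
  by rewrite !fsbig_finite //= sumrB.
have sum_v (a : R) : \sum_(w \in D) (if w == v then a else 0) = a.
  by rewrite (fsbigD1 v) //= eqxx fsbig1 ?addr0 // => w [_ /eqP /negbTE ->].
by rewrite /transfer_retraction fsbig_split // fsumB sum_v; exact: subrK.
Qed.

Lemma gsimplex_transfer_retraction D f : finite_set D -> D v ->
  gsimplex R V D f -> gsimplex R V D (transfer_retraction D f).
Proof.
move=> fin_D Dv Df; have f0 := gsimplex_ge0 Df.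
apply: gsimplex_intro; first by move=> w; exact: transfer_retraction_ge0.
  move=> w nDw; have fw0 := gsimplex_eq0 Df nDw.
  rewrite /transfer_retraction fw0 shift_eq0 // subr0 add0r.
  by case: eqP => // wv; move: nDw; rewrite wv.
by rewrite transfer_retraction_sum // gsimplex_sum.
Qed.

Hypothesis Qv : ~ Q v.

Lemma transfer_retraction_eq0 D f w : finite_set D -> (forall w, 0 <= f w) ->
  (forall w, ~ D w -> f w = 0) -> mass D Q f <= mass D P f -> Q w ->
  transfer_retraction D f w = 0.
Proof.
move=> fin_D f0 fD QP Qw.
have fw_le : f w <= mass D Q f.
  have [Dw|/fD ->] := pselect (D w); last exact: mass_ge0.
  rewrite /mass (fsbigD1 w) ?lerDl ?fsumr_ge0 //; exact: finite_setIl.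
rewrite /transfer_retraction /shift /cut.
have -> : (w \in P) = false by apply/negbTE/negP => /set_mem /PQ.
rewrite mem_set // min_l ?(le_trans fw_le) // add0r subrr add0r.
by case: eqP => // wv; move: Qw; rewrite wv.
Qed.

Lemma transfer_retraction_id D f : (forall w, 0 <= f w) ->
  (forall w, Q w -> f w = 0) -> transfer_retraction D f = f.
Proof.
move=> f0 fQ.
have mQ : mass D Q f = 0 by apply: fsbig1 => w [_ /fQ].
have sh0 w : shift D f w = 0.
  rewrite /shift /cut mQ; case: ifP => _; first rewrite min_r ?f0 // add0r.
    by case: ifP => [/set_mem/fQ ->|_]; rewrite ?min_l ?mass_ge0.
  by case: ifP => [/set_mem/fQ ->|_]; rewrite ?min_l ?mass_ge0 ?addr0.
apply: funext => w; rewrite /transfer_retraction sh0 subr0 fsbig1 //.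
by case: eqP; rewrite addr0.
Qed.

Lemma transfer_retraction_continuous D : finite_set D ->
  continuous (transfer_retraction D : {ptws V -> R} -> {ptws V -> R}).
Proof.
move=> fin_D.
have cut_cont Z Z' w : continuous (fun f : {ptws V -> R} => cut D Z Z' f w).
  rewrite /cut; case: (w \in Z); last exact: cst_continuous.
  by apply: min_fun_continuous; [exact: ptws_eval_continuous | exact: mass_continuous].
have shift_cont w : continuous (fun f : {ptws V -> R} => shift D f w).
  by move=> f; apply: continuousD; [exact: cut_cont | exact: cut_cont].
apply: ptws_continuous => w f.
apply: (continuousD (f := fun f : {ptws V -> R} => f w - shift D f w)).
  by apply: continuousB; [exact: ptws_eval_continuous | exact: shift_cont].
case: (w == v); last exact: cst_continuous.
exact: fsum_continuous.
Qed.

End TransferRetraction.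

Lemma transfer_retractionC (R : realType) (V : choiceType) (P Q : set V) v D
    (f : V -> R) :
  transfer_retraction Q P v D f = transfer_retraction P Q v D f.
Proof.
have shiftC : shift Q P D f = shift P Q D f.
  by apply: funext => w; rewrite /shift addrC.
by rewrite /transfer_retraction shiftC.
Qed.

Section SimplicialComplex.
Variables (V : choiceType) (K : set (set V)).
Hypothesis K_complex : simplicial_complex K.

Lemma complex_finite s : K s -> finite_set s.
Proof. by move=> Ks; case: K_complex => /(_ s Ks) []. Qed.

Lemma complex_sub s t : K s -> t `<=` s -> t !=set0 -> K t.
Proof. by case: K_complex => _; exact. Qed.

Lemma complex_pair s a b : K s -> s a -> s b -> K [set a; b].
Proof.
move=> Ks sa sb; apply: (complex_sub Ks); first by move=> u [->|->].
by exists a; left.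
Qed.

Lemma complex_vertex s w : K s -> s w -> vertices K w.
Proof.
move=> Ks sw; apply: (complex_sub Ks); first by move=> u ->.
by exists w.
Qed.

End SimplicialComplex.

Definition mixed (V : Type) (X Y s : set V) : Prop :=
  s `&` (X `\` Y) !=set0 /\ s `&` (Y `\` X) !=set0.

Definition cones_mixed_simplices (V : Type) (K : set (set V)) (X Y : set V) (v : V)
    : Prop :=
  forall s, K s -> mixed X Y s -> (X `&` Y) v /\ K (s `|` [set v]).

Lemma mixedC (V : Type) (X Y s : set V) : mixed X Y s -> mixed Y X s.
Proof. by case=> sX sY; split. Qed.

Lemma cones_mixed_simplicesC (V : Type) (K : set (set V)) (X Y : set V) v :
  cones_mixed_simplices K X Y v -> cones_mixed_simplices K Y X v.
Proof. by move=> cone s Ks /mixedC mix; rewrite setIC; exact: cone. Qed.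

Section MixedSimplex.
Variables (R : realType) (V : choiceType) (K : set (set V)) (X Y : set V) (v : V).
Hypothesis K_complex : simplicial_complex K.
Hypothesis XY_vertices : X `|` Y = vertices K.
Hypothesis K_cone : cones_mixed_simplices K X Y v.
Local Notation gsimplex := (gsimplex R V).
(* Applied to [setT], the sums defining the retraction range over the finite
   support of f. *)
Local Notation retraction := (transfer_retraction (X `\` Y) (Y `\` X) v).

Lemma side_disjoint w : (X `\` Y) w -> ~ (Y `\` X) w.
Proof. by move=> [_ nYw] []. Qed.

Lemma retraction_widen s f : gsimplex s f -> retraction setT f = retraction s f.
Proof.
move=> sf; apply: transfer_retraction_widen; first exact: side_disjoint.
  exact: gsimplex_ge0 sf.
exact: gsimplex_eq0 sf.
Qed.

Lemma gsimplex_retraction_mixed s f : K s ->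
  mixed X Y s -> gsimplex s f ->
  K (s `|` [set v]) /\ gsimplex (s `|` [set v]) (retraction setT f).
Proof.
move=> Ks mix sf; have [Av Ksv] := K_cone Ks mix; split => //.
have svf : gsimplex (s `|` [set v]) f by apply: gsimplex_sub sf => w sw; left.
rewrite (retraction_widen svf); apply: gsimplex_transfer_retraction => //.
- exact: side_disjoint.
- exact: (complex_finite K_complex Ksv).
- by right.
Qed.

Lemma cone_side_full_sub s : K s ->
  mixed X Y s -> full_sub K X ((s `|` [set v]) `&` X).
Proof.
move=> Ks mix; have [Av Ksv] := K_cone Ks mix; split; last by move=> w [].
by apply: (complex_sub K_complex Ksv) => [w []//|]; exists v; split; [right | case: Av].
Qed.

Lemma gsimplex_retraction_mixed_side s f : K s ->
  mixed X Y s -> gsimplex s f ->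
  mass s (Y `\` X) f <= mass s (X `\` Y) f ->
  gsimplex ((s `|` [set v]) `&` X) (retraction setT f).
Proof.
move=> Ks mix sf YX; have [Av _] := K_cone Ks mix.
have [_ svf] := gsimplex_retraction_mixed Ks mix sf.
apply: gsimplex_setI svf _ => w svw nXw.
have Yw : Y w.
  case: svw => [sw|->]; last by case: Av.
  by move: (complex_vertex K_complex Ks sw); rewrite -XY_vertices => -[].
have nYXv : ~ (Y `\` X) v by case=> _ []; case: Av.
rewrite (retraction_widen sf).
exact: (transfer_retraction_eq0 side_disjoint nYXv (complex_finite K_complex Ks)
  (gsimplex_ge0 sf) (gsimplex_eq0 sf) YX (conj Yw nXw)).
Qed.

End MixedSimplex.

Section ConeRetraction.
Variables (R : realType) (V : choiceType) (K : set (set V)) (X Y : set V) (v : V).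
Hypothesis K_complex : simplicial_complex K.
Hypothesis XY_vertices : X `|` Y = vertices K.
Hypothesis K_cone : cones_mixed_simplices K X Y v.
Local Notation gsimplex := (gsimplex R V).
Local Notation L := (full_sub K X `|` full_sub K Y).
Local Notation retraction := (transfer_retraction (X `\` Y) (Y `\` X) v).

Lemma unmixed_side s : K s ->
  ~ mixed X Y s -> s `<=` X \/ s `<=` Y.
Proof.
move=> Ks not_mixed.
have side w : s w -> X w \/ Y w.
  by move=> sw; move: (complex_vertex K_complex Ks sw); rewrite -XY_vertices.
have [[y [sy [Yy nXy]]]|noY] := pselect (s `&` (Y `\` X) !=set0).
  right => w sw; have [//|nYw] := pselect (Y w); exfalso.
  apply: not_mixed; split; last by exists y.
  by exists w; split => //; split => //; case: (side w sw).
left => w sw; have [//|nXw] := pselect (X w); exfalso.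
by apply: noY; exists w; split => //; split => //; case: (side w sw).
Qed.

Lemma retraction_fix_side s f : gsimplex s f -> s `<=` X \/ s `<=` Y ->
  retraction setT f = f.
Proof.
move=> sf; have f0 := gsimplex_ge0 sf; case=> [sX|sY].
  apply: transfer_retraction_id => // w [_ nXw].
  by apply: (gsimplex_eq0 sf) => /sX.
rewrite -transfer_retractionC; apply: transfer_retraction_id => // w [_ nYw].
by apply: (gsimplex_eq0 sf) => /sY.
Qed.

Lemma retraction_fix f : realization R V L f -> retraction setT f = f.
Proof.
by case=> s [[_ sX]|[_ sY]] sf; apply: (retraction_fix_side sf); [left|right].
Qed.

Lemma retraction_simplexwise s : K s ->
  exists h : {ptws V -> R} -> {ptws V -> R}, continuous h /\
  exists2 s', K s' & s `<=` s' /\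
    forall f, gsimplex s f ->
      retraction setT f = h f /\ gsimplex s' (retraction setT f).
Proof.
move=> Ks; exists (retraction s); split.
  exact/transfer_retraction_continuous/(complex_finite K_complex Ks).
have [mix|unmixed] := pselect (mixed X Y s).
  have [_ Ksv] := K_cone Ks mix.
  exists (s `|` [set v]) => //; split => [w sw|f sf]; first by left.
  split; first by rewrite (retraction_widen X Y v sf).
  exact: (gsimplex_retraction_mixed K_complex K_cone Ks mix sf).2.
exists s => //; split => // f sf.
have fixf := retraction_fix_side sf (unmixed_side Ks unmixed).
by split; [rewrite -(retraction_widen X Y v sf) | rewrite fixf].
Qed.

Lemma retraction_piecewise s : K s ->
  exists (C1 C2 : set {ptws V -> R}) s1 s2, [/\ closed C1, closed C2, L s1, L s2 &
    forall f, gsimplex s f -> [/\ C1 f \/ C2 f,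
      C1 f -> gsimplex s1 (retraction setT f) &
      C2 f -> gsimplex s2 (retraction setT f)]].
Proof.
move=> Ks; have fin_s := complex_finite K_complex Ks.
have [mix|unmixed] := pselect (mixed X Y s); last first.
  have side := unmixed_side Ks unmixed.
  have Ls : L s by case: side => ?; [left|right].
  exists setT, setT, s, s; split => //.
  by move=> f sf; rewrite (retraction_fix_side sf side); split => //; left.
have YX_vertices : Y `|` X = vertices K by rewrite setUC.
have coneYX := cones_mixed_simplicesC K_cone.
exists [set f | mass s (Y `\` X) f <= mass s (X `\` Y) f].
exists [set f | mass s (X `\` Y) f <= mass s (Y `\` X) f].
exists ((s `|` [set v]) `&` X), ((s `|` [set v]) `&` Y); split.
- by apply: closed_le_continuous; exact: mass_continuous.
- by apply: closed_le_continuous; exact: mass_continuous.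
- by left; exact: (cone_side_full_sub K_complex K_cone Ks mix).
- by right; exact: (cone_side_full_sub K_complex coneYX Ks (mixedC mix)).
move=> f sf; split.
- by case/orP: (le_total (mass s (Y `\` X) f) (mass s (X `\` Y) f)); [left|right].
- exact: (gsimplex_retraction_mixed_side K_complex XY_vertices K_cone Ks mix sf).
- rewrite -transfer_retractionC.
  exact: (gsimplex_retraction_mixed_side K_complex YX_vertices coneYX Ks
    (mixedC mix) sf).
Qed.

Theorem cones_mixed_incl_weak_equivalence : incl_weak_equivalence R L K.
Proof.
apply: (incl_weak_equivalence_of_retraction (r := retraction setT)).
- exact: complex_finite.
- exact: retraction_fix.
- exact: retraction_simplexwise.
- exact: retraction_piecewise.
Qed.

End ConeRetraction.

Section ConeConditions.
Variables (V : choiceType) (K : set (set V)) (X Y : set V).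
Hypothesis K_complex : simplicial_complex K.
Hypothesis K_clique : clique K.
Hypothesis XY_vertices : X `|` Y = vertices K.
Local Notation A := (X `&` Y).
Local Notation E :=
  (edges K `\` [set s | K s /\ (s `<=` X \/ s `<=` Y \/ s `&` A !=set0)]).

Lemma vertex_trichotomy s w : K s -> s w -> (X `\` Y) w \/ (Y `\` X) w \/ A w.
Proof.
move=> Ks sw; have [Xw|Yw] : (X `|` Y) w.
  by rewrite XY_vertices; exact: complex_vertex Ks sw.
- by have [Yw|nYw] := pselect (Y w); [right; right | left].
- by have [Xw|nXw] := pselect (X w); [right; right | right; left].
Qed.

Lemma sides_neq x y : (X `\` Y) x -> (Y `\` X) y -> x <> y.
Proof. by move=> [_ nYx] [Yy _] xy; apply: nYx; rewrite xy. Qed.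

Lemma cones_mixed_of_edges v :
  (forall s, K s -> mixed X Y s ->
     A v /\ forall w, s w -> K [set v; w]) ->
  cones_mixed_simplices K X Y v.
Proof.
move=> cone_edges s Ks mix; have [Av vs] := cone_edges s Ks mix; split => //.
case: mix => [[x [sx Xx]] [y [sy Yy]]].
have fin_sv : finite_set (s `|` [set v]).
  by rewrite finite_setU; split; [exact: complex_finite Ks | exact: finite_set1].
have two : exists a b, (s `|` [set v]) a /\ (s `|` [set v]) b /\ a <> b.
  by exists x, y; split; [left | split; [left | exact: sides_neq]].
apply/(K_clique fin_sv two) => a b [sa|->] [sb|->] ab.
- exact: complex_pair Ks sa sb.
- by rewrite setUC; exact: vs.
- exact: vs.
- by [].
Qed.

Lemma mixed_edge x y : (X `\` Y) x -> (Y `\` X) y -> K [set x; y] -> E [set x; y].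
Proof.
move=> Xx Yy Kxy; split.
  by split => //; exists x, y; split => //; exact: sides_neq.
case: Xx Yy => [Xx nYx] [Yy nXy] [_ [xyX|[xyY|[u [xyu [Xu Yu]]]]]].
- by apply: nXy; apply: xyX; right.
- by apply: nYx; apply: xyY; left.
- by case: xyu => e; [apply: nYx | apply: nXy]; rewrite -e.
Qed.

Lemma cones_mixed_of_star_adjacent v :
  (forall t, E t -> St K t A [set v]) ->
  (forall t w, E t -> St K t A [set w] -> K [set v; w]) ->
  cones_mixed_simplices K X Y v.
Proof.
move=> v_star v_adj; apply: cones_mixed_of_edges => s Ks [[x [sx Xx]] [y [sy Yy]]].
have Exy := mixed_edge Xx Yy (complex_pair K_complex Ks sx sy).
have v_edge t a : E t -> t a -> K [set v; a].
  move=> Et ta; have [_ [_ [_ Kvt]]] := v_star t Et.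
  apply: (complex_sub K_complex Kvt) => [u [->|->]|].
  - by left.
  - by right.
  - by exists v; left.
split; first by have [/(_ v erefl)] := v_star _ Exy.
move=> w sw; have [Xw|[Yw|Aw]] := vertex_trichotomy Ks sw.
- apply: (v_edge [set w; y]); last by left.
  exact/mixed_edge/(complex_pair K_complex Ks sw sy).
- apply: (v_edge [set x; w]); last by right.
  exact/mixed_edge/(complex_pair K_complex Ks sx sw).
- apply: (v_adj _ _ Exy); split; first by move=> u ->.
  split; first by exists w.
  split; first exact: finite_set1.
  by apply: (complex_sub K_complex Ks) => [u [->|[->|->]] //|]; exists w; left.
Qed.

Lemma cones_mixed_of_star_central v :
  (forall t, E t -> St K t A [set v]) ->
  (forall t, E t -> central_vertex (St K t A) v) ->
  cones_mixed_simplices K X Y v.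
Proof.
move=> v_star v_central; apply: cones_mixed_of_star_adjacent => // t w Et Stw.
have [_ [_ [_ Kwvt]]] := v_central t Et _ Stw.
apply: (complex_sub K_complex Kwvt) => [u [->|->]|].
- by left; right.
- by left; left.
- by exists v; left.
Qed.

Lemma cones_mixed_of_small_simplices v : A v ->
  (forall t, K t -> is_singleton (t `&` (X `\` A)) ->
     is_singleton (t `&` (Y `\` A)) -> at_most_one (t `&` A) ->
     K (t `|` [set v])) ->
  cones_mixed_simplices K X Y v.
Proof.
have -> : X `\` A = X `\` Y by rewrite setDIr setDv set0U.
have -> : Y `\` A = Y `\` X by rewrite setDIr setDv setU0.
move=> Av small; apply: cones_mixed_of_edges => s Ks [[x [sx Xx]] [y [sy Yy]]].
split => // w sw.
have triangle a b : (X `\` Y) a -> (Y `\` X) b -> s a -> s b ->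
    w = a \/ w = b \/ A w -> K [set v; w].
  move=> [Xa nYa] [Yb nXb] sa sb hw.
  have Kt : K [set a; b; w].
    by apply: (complex_sub K_complex Ks) => [u [[->|->]|->] //|]; exists a; left; left.
  have Ktv : K ([set a; b; w] `|` [set v]).
    apply: (small _ Kt).
    - exists a; apply/seteqP; split => [u [[[->|->]|->] [Xu nYu]] //|u ->].
      + by case: hw => [//|[wb|[_ Yw]]]; [move: Xu; rewrite wb | case: nYu].
      + by split; [left; left | split].
    - exists b; apply/seteqP; split => [u [[[->|->]|->] [Yu nXu]] //|u ->].
      + by case: hw => [wa|[//|[Xw _]]]; [move: Yu; rewrite wa | case: nXu].
      + by split; [left; right | split].
    - by move=> u u' [[[->|->]|->] [Xu Yu]] [[[->|->]|->] [Xu' Yu']].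
  apply: (complex_sub K_complex Ktv) => [u [->|->]|].
  - by right.
  - by left; right.
  - by exists v; left.
have [Xw|[Yw|Aw]] := vertex_trichotomy Ks sw.
- by apply: (triangle w y) => //; left.
- by apply: (triangle x w) => //; right; left.
- by apply: (triangle x y) => //; right; right.
Qed.

End ConeConditions.

Theorem proposition9p5 (R : realType) (V : choiceType) (K : set (set V))
  (X Y : set V) :
  simplicial_complex K -> clique K ->
  X `|` Y = vertices K ->
  let A := X `&` Y in
  let P := [set s | K s /\ (s `<=` X \/ s `<=` Y \/ s `&` A !=set0)] in
  let E := edges K `\` P in
  ((exists v : V,
      (forall t, E t -> St K t A [set v]) /\
      (forall t w, E t -> St K t A [set w] -> K [set v; w])) \/
   (exists v : V,
      (forall t, E t -> St K t A [set v]) /\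
      (forall t, E t -> central_vertex (St K t A) v)) \/
   (exists2 v : V, A v &
      forall t, K t -> is_singleton (t `&` (X `\` A)) ->
        is_singleton (t `&` (Y `\` A)) -> at_most_one (t `&` A) ->
        K (t `|` [set v]))) ->
  incl_weak_equivalence R (full_sub K X `|` full_sub K Y) K.
Proof.
move=> K_complex K_clique XY_vertices A P E conditions.
have [v K_cone] : exists v, cones_mixed_simplices K X Y v.
  case: conditions => [[v [v_star v_adj]]|[[v [v_star v_central]]|[v Av v_small]]].
  - by exists v; exact: cones_mixed_of_star_adjacent v_star v_adj.
  - by exists v; exact: cones_mixed_of_star_central v_star v_central.
  - by exists v; exact: cones_mixed_of_small_simplices Av v_small.
exact: cones_mixed_incl_weak_equivalence K_complex XY_vertices K_cone.
Qed.
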